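(* Let $\alpha$ be a reduced operation sequence. If a push operation of $\alpha$ is fixed, then every pop operation of $\alpha$ corresponding to it is also fixed.
   Context: Operation sequences: $\sigma[a]$ ($a\ge1$) denotes pushing the top $a$ elements of the input stack, as a block with relative order unchanged, onto the top of a working stack; $\tau[b]$ ($b\ge1$) denotes moving the top $b$ elements of the working stack, as a block with relative order unchanged, onto the top of an output stack; $\sigma=\sigma[1]$, $\tau=\tau[1]$. A well-formed operation sequence is a word $\alpha=\alpha_1\cdots\alpha_m$ in these symbols such that in every prefix the total push size is at least the total pop size, with equality for the whole word; its size $n$ is the total push size. Acting on an input stack containing $1,\dots,n$ with $1$ on top, it produces the permutation read from the final output stack top to bottom. Two well-formed sequences are equivalent if they have the same size and produce the same permutation. $\alpha$ is reduced if every consecutive pair $\alpha_i\alpha_{i+1}$ with $\alpha_i$ a push and $\alpha_{i+1}$ a pop equals $\sigma[1]\tau[1]$. The vertices of $\alpha$ are $v_0=(0,0)$ and $v_i=v_{i-1}+(a,a)$ if $\alpha_i=\sigma[a]$, $v_i=v_{i-1}+(b,-b)$ if $\alpha_i=\tau[b]$. The support of a push (resp. pop) is the set of elements it places on (resp. removes from) the working stack when $\alpha$ acts on input $1,\dots,n$. A push and a pop correspond if their supports intersect. An operation $\alpha_i$ of a reduced sequence $\alpha$ is fixed if for every reduced sequence $\beta=\beta_1\cdots\beta_{m'}$ equivalent to $\alpha$, with vertices $w_0,\dots,w_{m'}$, there is $j$ with $w_{j-1}=v_{i-1}$ and $w_j=v_i$. *)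

From mathcomp Require Import all_boot all_order all_algebra.
Set Implicit Arguments. Unset Strict Implicit. Unset Printing Implicit Defensive.
Import GRing.Theory Num.Theory.

(* Push a = sigma[a], Pop b = tau[b]. *)
Inductive op := Push of nat | Pop of nat.

Definition is_push (o : op) : bool := if o is Push _ then true else false.
Definition is_pop (o : op) : bool := if o is Pop _ then true else false.
Definition push_size (o : op) : nat := if o is Push a then a else 0.
Definition pop_size (o : op) : nat := if o is Pop b then b else 0.
Definition op_size (o : op) : nat := match o with Push a => a | Pop b => b end.

Definition total_push (s : seq op) : nat := sumn (map push_size s).
Definition total_pop (s : seq op) : nat := sumn (map pop_size s).

Definition op_seq_size (s : seq op) : nat := total_push s.

Definition well_formed (s : seq op) : Prop :=
  (forall i, i < size s -> 1 <= op_size (nth (Push 0) s i)) /\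
  (forall k, k <= size s -> total_pop (take k s) <= total_push (take k s)) /\
  total_pop s = total_push s.

(* State: (input stack, working stack, output stack), each listed top first. *)
Definition state := (seq nat * seq nat * seq nat)%type.

Definition step (st : state) (o : op) : state :=
  let: (inp, work, out) := st in
  match o with
  | Push a => (drop a inp, take a inp ++ work, out)
  | Pop b => (inp, drop b work, take b work ++ out)
  end.

Definition init_state (s : seq op) : state := (iota 1 (op_seq_size s), [::], [::]).

(* states.[i] = state before the i-th operation (0-based); last = final state *)
Definition states (s : seq op) : seq state := init_state s :: scanl step (init_state s) s.

Definition final_state (s : seq op) : state := foldl step (init_state s) s.

(* permutation produced: output stack read top to bottom *)
Definition produced (s : seq op) : seq nat := (final_state s).2.

Definition equivalent (s t : seq op) : Prop :=
  well_formed s /\ well_formed t /\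
  op_seq_size s = op_seq_size t /\ produced s = produced t.

Definition reduced (s : seq op) : Prop :=
  forall i, i.+1 < size s ->
    is_push (nth (Push 0) s i) -> is_pop (nth (Push 0) s i.+1) ->
    nth (Push 0) s i = Push 1 /\ nth (Push 0) s i.+1 = Pop 1.

Definition vstep (v : int * int) (o : op) : int * int :=
  match o with
  | Push a => (v.1 + a%:Z, v.2 + a%:Z)
  | Pop b => (v.1 + b%:Z, v.2 - b%:Z)
  end%R.

Definition vertices (s : seq op) : seq (int * int) :=
  (0%R, 0%R) :: scanl vstep (0%R, 0%R) s.

Definition edge (s : seq op) (i : nat) : (int * int) * (int * int) :=
  (nth (0%R, 0%R) (vertices s) i, nth (0%R, 0%R) (vertices s) i.+1).

Definition support (s : seq op) (i : nat) : seq nat :=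
  let: (inp, work, _) := nth (init_state s) (states s) i in
  match nth (Push 0) s i with
  | Push a => take a inp
  | Pop b => take b work
  end.

Definition correspond (s : seq op) (i k : nat) : Prop :=
  exists x, x \in support s i /\ x \in support s k.

Definition fixed (s : seq op) (i : nat) : Prop :=
  forall t : seq op, reduced t -> equivalent s t ->
    exists j, j < size t /\ edge t j = edge s i.

From Pilot Require Import Defs.
From mathcomp Require Import all_boot all_order all_algebra zify.
Set Implicit Arguments. Unset Strict Implicit. Unset Printing Implicit Defensive.

(* Run a sequence on 1, ..., n and let pushed t and popped t count the elements
   pushed and popped by its first t operations.  The vertex before operation t
   is (pushed t + popped t, pushed t - popped t), so an operation is an edge
   determined by these two counts before and after it.  Elements are pushed in
   increasing order: operation j brings pushed j + 1, ..., pushed j.+1 onto the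
   working stack.

   Let x lie in the supports of the fixed push and of the pop, and let t be an
   equivalent reduced sequence; x is removed by some pop of t.  Three facts,
   read off from the common output permutation, make the two pops of x the
   same edge.  (1) In a reduced sequence, the number of elements pushed before
   a pop is the maximum of the output from any element of that pop onwards,
   because the last push before the pop is a sigma[1] at once undone by a
   tau[1].  (2) An element u in the working stack together with x is removed
   with x iff u and x are in the same relative order in the stack and in the
   output.  (3) The relative order of two elements in the working stack only
   depends on their values and on whether one push brought both, which for u
   against x is decided by the fixed push.  So both pops remove the same
   elements; hence they have the same size, follow the same number of pushes,
   and follow the same number of pops, namely the elements after the popped
   block in the output. *)

Section SeqFacts.
Variable T : eqType.
Implicit Types (pre C O l : seq T) (x y : T).

Lemma index_drop_uniq l n x : uniq l -> x \in drop n l ->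
  index x l = n + index x (drop n l).
Proof.
move=> ul xl; have le_n : n <= size l.
  by case: leqP xl => // /ltnW/drop_oversize->.
have x_take : x \notin take n l.
  move: ul; rewrite -{1}(cat_take_drop n l) cat_uniq => /and3P[_ /hasPn dis _].
  exact: dis.
by rewrite -{1}(cat_take_drop n l) index_cat (negbTE x_take) size_takel.
Qed.

Lemma index_cat_mid pre C O x : uniq (pre ++ C ++ O) -> x \in C ->
  index x (pre ++ C ++ O) = size pre + index x C.
Proof.
move=> u xC; have x_pre : x \notin pre.
  move: u; rewrite cat_uniq => /and3P[_ /hasPn dis _].
  by apply: dis; rewrite mem_cat xC.
by rewrite index_cat (negbTE x_pre) index_cat xC.
Qed.

Lemma drop_index_cat_mid pre C O x : uniq (pre ++ C ++ O) -> x \in C ->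
  drop (index x (pre ++ C ++ O)) (pre ++ C ++ O) = drop (index x C) C ++ O.
Proof.
move=> u xC; rewrite index_cat_mid // drop_cat ltnNge leq_addr /= addKn.
by rewrite drop_cat index_mem xC.
Qed.

Lemma index_cat_mid_lt_suffix pre C O x y : uniq (pre ++ C ++ O) ->
  x \in C -> y \in O -> index x (pre ++ C ++ O) < index y (pre ++ C ++ O).
Proof.
move=> u xC yO; have : y \notin pre ++ C.
  by move: u; rewrite catA cat_uniq => /and3P[_ /hasPn dis _]; apply: dis.
rewrite mem_cat negb_or => /andP[y_pre y_C].
rewrite index_cat_mid // index_cat (negbTE y_pre) index_cat (negbTE y_C) ltn_add2l.
by rewrite (@leq_trans (size C)) ?leq_addr ?index_mem.
Qed.

Lemma suffix_filter pre C O x : uniq (pre ++ C ++ O) -> x \in C ->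
  let l := pre ++ C ++ O in O = [seq y <- l | (index x l < index y l) && (y \notin C)].
Proof.
move=> u xC l; rewrite /l !filter_cat.
rewrite (@eq_in_filter _ _ pred0 pre); last first.
  move=> y y_pre /=; apply/negbTE; rewrite negb_and -leqNgt (index_cat_mid u xC).
  rewrite index_cat y_pre ltnW // (@leq_trans (size pre)) ?leq_addr //.
  by rewrite index_mem.
rewrite (@eq_in_filter _ _ pred0 C) => [|y ->]; last by rewrite andbF.
rewrite !filter_pred0 -{1}(filter_predT O); apply: eq_in_filter => y yO /=.
rewrite index_cat_mid_lt_suffix //=.
move: u; rewrite catA cat_uniq => /and3P[_ /hasPn dis _].
by have := dis y yO; rewrite mem_cat negb_or => /andP[].
Qed.

End SeqFacts.

Lemma index_iota m n y : m <= y < m + n -> index y (iota m n) = y - m.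
Proof.
move=> /andP[le_my lt_y]; have lt_n : y - m < n by lia.
have -> : y = nth 0 (iota m n) (y - m) by rewrite nth_iota //; lia.
by rewrite index_uniq ?iota_uniq ?size_iota // nth_iota //; lia.
Qed.

Lemma take_drop_iota N m k : m + k <= N -> take k (drop m (iota 1 N)) = iota m.+1 k.
Proof. by move=> le_mk; rewrite drop_iota take_iota add1n; congr iota; lia. Qed.

Section Run.
Variable s : seq op.
Local Notation op_at t := (nth (Push 0) s t).
Local Notation n := (op_seq_size s).

Definition pushed t := total_push (take t s).
Definition popped t := total_pop (take t s).
Definition config t := foldl step (init_state s) (take t s).
Definition input t := (config t).1.1.
Definition work t := (config t).1.2.
Definition output t := (config t).2.

Lemma take_opsS t :
  take t.+1 s = take t s ++ (if t < size s then [:: op_at t] else [::]).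
Proof.
case: ltnP => lt_t; first by rewrite (take_nth (Push 0) lt_t) cats1.
by rewrite !take_oversize ?cats0 // (leq_trans lt_t).
Qed.

Lemma pushedS t : pushed t.+1 = pushed t + push_size (op_at t).
Proof.
rewrite /pushed take_opsS /total_push map_cat sumn_cat.
by case: ltnP => lt_t /=; [rewrite addn0 | rewrite nth_default].
Qed.

Lemma poppedS t : popped t.+1 = popped t + pop_size (op_at t).
Proof.
rewrite /popped take_opsS /total_pop map_cat sumn_cat.
by case: ltnP => lt_t /=; [rewrite addn0 | rewrite nth_default].
Qed.

Lemma configS t : config t.+1 = step (config t) (op_at t).
Proof.
rewrite /config take_opsS; case: ltnP => lt_t; first by rewrite foldl_cat.
by rewrite cats0 nth_default //; case: (foldl _ _ _) => [[? ?] ?] /=; rewrite drop0 take0.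
Qed.

Lemma pushed0 : pushed 0 = 0. Proof. by rewrite /pushed take0. Qed.
Lemma popped0 : popped 0 = 0. Proof. by rewrite /popped take0. Qed.

Lemma pushed_pop t b : op_at t = Pop b -> pushed t.+1 = pushed t.
Proof. by move=> o_t; rewrite pushedS o_t addn0. Qed.

Lemma pushed_mono : {homo pushed : t1 t2 / t1 <= t2}.
Proof.
move=> t1 t2; elim: t2 => [|t2 IH]; first by rewrite leqn0 => /eqP->.
rewrite leq_eqVlt => /orP[/eqP->//|/IH le1].
by rewrite pushedS (leq_trans le1) ?leq_addr.
Qed.

Lemma pushed_le_size t : pushed t <= n.
Proof.
rewrite /op_seq_size /pushed -{2}(cat_take_drop t s) /total_push map_cat sumn_cat.
exact: leq_addr.
Qed.

Lemma produced_output : produced s = output (size s).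
Proof. by rewrite /output /config take_size. Qed.

Lemma outputS t : output t.+1 =
  if op_at t is Pop b then take b (work t) ++ output t else output t.
Proof.
rewrite /work /output configS.
by case: (config t) => [[I W] O]; case: (op_at t).
Qed.

Lemma output_suffix t t' : t <= t' -> exists pre, output t' = pre ++ output t.
Proof.
elim: t' => [|t' IH]; first by rewrite leqn0 => /eqP->; exists [::].
rewrite leq_eqVlt => /orP[/eqP->|/IH[pre out_t']]; first by exists [::].
rewrite outputS out_t'; case: (op_at t') => [a|b]; first by exists pre.
by exists (take b (work t') ++ pre); rewrite catA.
Qed.

Lemma output_popped t e : e \in output t ->
  exists k b, [/\ k < t, k < size s, op_at k = Pop b & e \in take b (work k)].
Proof.
elim: t => [|t IH]; first by rewrite /output /config take0.
rewrite outputS; case o_t: (op_at t) => [a|b].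
  by case/IH => k [b [? ? ? ?]]; exists k, b; split=> //; apply: ltnW.
rewrite mem_cat => /orP[e_C|/IH[k [b' [? ? ? ?]]]]; last first.
  by exists k, b'; split=> //; apply: ltnW.
by exists t, b; split=> //; case: ltnP o_t => // le_t; rewrite nth_default.
Qed.

Definition same_push y z :=
  ~~ has (fun t => minn y z <= pushed t < maxn y z) (iota 0 (size s).+1).

Lemma same_pushC y z : same_push y z = same_push z y.
Proof. by rewrite /same_push minnC maxnC. Qed.

Lemma not_same_push t y z : t <= size s -> minn y z <= pushed t < maxn y z ->
  ~~ same_push y z.
Proof. by move=> le_t sep; rewrite negbK; apply/hasP; exists t; rewrite ?mem_iota. Qed.

Lemma same_push_block j x u : j < size s -> pushed j < x <= pushed j.+1 ->
  same_push u x = (pushed j < u <= pushed j.+1).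
Proof.
move=> lt_j /andP[lt_x le_x]; case: (ltnP (pushed j) u) => [lt_u|le_u] /=.
  case: (leqP u (pushed j.+1)) => [le_u|lt_u'].
    apply/hasPn => t _; case: (leqP t j) => [/pushed_mono|/pushed_mono]; lia.
  apply/negbTE/(@not_same_push j.+1) => //.
  by rewrite geq_min le_x orbT leq_max lt_u'.
apply/negbTE/(@not_same_push j); first exact: ltnW.
by rewrite geq_min le_u leq_max lt_x orbT.
Qed.

Hypothesis wf : well_formed s.

Lemma popped_le_pushed t : popped t <= pushed t.
Proof.
have [_ [pref tot]] := wf; case: (leqP t (size s)) => [|/ltnW le_t]; first exact: pref.
by rewrite /popped /pushed !take_oversize // tot.
Qed.

Lemma config_invariant t : [/\ input t = drop (pushed t) (iota 1 n),
  perm_eq (work t ++ output t) (iota 1 (pushed t)) & size (output t) = popped t].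
Proof.
elim: t => [|t [inp_t perm_t size_t]].
  by rewrite /input /work /output /config take0 pushed0 popped0 /= drop0.
have := popped_le_pushed t.+1; have := pushed_le_size t.+1.
move: inp_t perm_t size_t; rewrite /input /work /output configS pushedS poppedS.
case: (config t) => [[I W] O] /= -> perm_t size_t.
case: (op_at t) => [a|b] /=; rewrite ?addn0 => le_n le_popped.
  split=> //; first by rewrite drop_drop addnC.
  by rewrite take_drop_iota // iotaD add1n -catA perm_sym perm_catC perm_cat2l perm_sym.
have size_WO : size W + size O = pushed t.
  by rewrite -size_cat (perm_size perm_t) size_iota.
split=> //; first by rewrite perm_catCA catA cat_take_drop.
by rewrite size_cat size_t size_takel //; lia.
Qed.

Lemma uniq_work_output t : uniq (work t ++ output t).
Proof. by case: (config_invariant t) => _ /perm_uniq-> _; apply: iota_uniq. Qed.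

Lemma mem_work_output t e : (e \in work t ++ output t) = (0 < e <= pushed t).
Proof. by case: (config_invariant t) => _ /perm_mem-> _; rewrite mem_iota add1n ltnS. Qed.

Lemma uniq_work t : uniq (work t).
Proof. by have := uniq_work_output t; rewrite cat_uniq => /andP[]. Qed.

Lemma work_range t e : e \in work t -> 0 < e <= pushed t.
Proof. by move=> e_w; rewrite -mem_work_output mem_cat e_w. Qed.

Lemma work_notin_output t e : e \in work t -> e \notin output t.
Proof.
have := uniq_work_output t; rewrite cat_uniq => /and3P[_ /hasPn dis _] e_w.
by apply/negP => /dis; rewrite e_w.
Qed.

Lemma size_output t : size (output t) = popped t.
Proof. by case: (config_invariant t). Qed.

Lemma size_work t : size (work t) = pushed t - popped t.
Proof.
case: (config_invariant t) => _ /perm_size; rewrite size_cat size_iota => <- <-.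
by rewrite addnK.
Qed.

Lemma work_end : work (size s) = [::].
Proof.
apply/eqP; rewrite -size_eq0 size_work /pushed /popped take_size.
by case: wf => _ [_ ->]; rewrite subnn.
Qed.

Lemma perm_produced : perm_eq (produced s) (iota 1 n).
Proof.
case: (config_invariant (size s)) => _.
by rewrite produced_output work_end /pushed take_size.
Qed.

Lemma uniq_produced : uniq (produced s).
Proof. by rewrite (perm_uniq perm_produced) iota_uniq. Qed.

Lemma mem_produced e : (e \in produced s) = (0 < e <= n).
Proof. by rewrite (perm_mem perm_produced) mem_iota add1n ltnS. Qed.

Lemma produced_pop k b : k < size s -> op_at k = Pop b ->
  exists pre, produced s = pre ++ take b (work k) ++ output k.
Proof.
move=> lt_k o_k; have [pre out_end] := output_suffix lt_k.
by exists pre; rewrite produced_output out_end outputS o_k.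
Qed.

Lemma workS t : work t.+1 = if op_at t is Pop b then drop b (work t)
  else iota (pushed t).+1 (push_size (op_at t)) ++ work t.
Proof.
have := pushed_le_size t.+1; rewrite pushedS.
case: (config_invariant t) => inp_t _ _; move: inp_t.
rewrite /work /input configS; case: (config t) => [[I W] O] /= ->.
by case: (op_at t) => [a|b] //= le_n; rewrite take_drop_iota.
Qed.

Lemma work_order t y z : y \in work t -> z \in work t -> y != z ->
  (index y (work t) < index z (work t)) = ((y < z) == same_push y z).
Proof.
elim: t y z => [|t IH] y z; first by rewrite /work /config take0.
rewrite workS; case o_t: (op_at t) => [a|b] /=; last first.
  move=> /[dup] y_d /mem_drop y_w /[dup] z_d /mem_drop z_w /(IH _ _ y_w z_w) <-.
  rewrite (index_drop_uniq (uniq_work t) y_d) (index_drop_uniq (uniq_work t) z_d).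
  by rewrite ltn_add2l.
have block e : e \in iota (pushed t).+1 a -> t < size s /\ pushed t < e <= pushed t.+1.
  rewrite mem_iota pushedS o_t /= => e_new; split; last by lia.
  case: ltnP o_t => // le_t; rewrite nth_default // => -[a0].
  by move: e_new; rewrite -a0; lia.
rewrite !mem_cat !index_cat size_iota.
case y_new: (y \in iota _ _); case z_new: (z \in iota _ _) => /= y_w z_w yz.
- have [lt_t y_blk] := block y y_new; have [_ z_blk] := block z z_new.
  rewrite (same_push_block _ lt_t z_blk) y_blk eqb_id.
  move: y_new z_new; rewrite !mem_iota => y_new z_new.
  by rewrite !index_iota //; apply/idP/idP; lia.
- have [lt_t y_blk] := block y y_new; have z_le := work_range z_w.
  rewrite same_pushC (same_push_block _ lt_t y_blk) index_iota; last by rewrite -mem_iota.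
  have -> : (y < z) = false by lia.
  by rewrite /=; move: y_new; rewrite mem_iota; lia.
- have [lt_t z_blk] := block z z_new; have y_le := work_range y_w.
  rewrite (same_push_block _ lt_t z_blk) index_iota; last by rewrite -mem_iota.
  have -> : (y < z) = true by lia.
  by rewrite /=; move: z_new; rewrite mem_iota; lia.
- by rewrite ltn_add2l IH.
Qed.

Lemma size_pop_block k b : op_at k = Pop b -> size (take b (work k)) = b.
Proof.
move=> o_k; rewrite size_takel // size_work.
by have := popped_le_pushed k.+1; rewrite pushedS poppedS o_k /=; lia.
Qed.

Lemma mem_work_before t k x : t < k -> x \in work k -> 0 < x <= pushed t ->
  x \in work t /\ x \notin output t.+1.
Proof.
move=> lt_tk x_wk x_le; have [pre out_k] := output_suffix lt_tk.
have x_out : x \notin output t.+1.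
  by apply: contra (work_notin_output x_wk); rewrite out_k mem_cat orbC => ->.
split=> //; move: x_le; rewrite -mem_work_output mem_cat => /orP[//|x_out_t].
by move: x_out; rewrite outputS; case: (op_at t) => [a|b]; rewrite ?mem_cat x_out_t ?orbT.
Qed.

Lemma last_push k : 0 < pushed k -> exists t0, [/\ t0 < k, is_push (op_at t0),
  pushed k = pushed t0.+1 & forall t, t0 < t < k -> is_pop (op_at t)].
Proof.
elim: k => [|k IH]; first by rewrite pushed0.
case o_k: (op_at k) => [a|b] pushed_k.
  by exists k; split=> // [|t /andP[lt_kt /(leq_ltn_trans lt_kt)]]; rewrite ?o_k ?ltnn.
rewrite (pushed_pop o_k) in pushed_k *.
have [t0 [lt_t0 push_t0 pushed_t0 pops]] := IH pushed_k.
exists t0; split=> //; first exact: ltnW.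
move=> t /andP[lt_t0t]; rewrite ltnS leq_eqVlt => /orP[/eqP->|lt_tk]; first by rewrite o_k.
by apply: pops; rewrite lt_t0t.
Qed.

Lemma mem_pop_block k b x u : k < size s -> op_at k = Pop b ->
  x \in take b (work k) -> u \in work k ->
  (u \in take b (work k)) =
  ((index u (work k) < index x (work k)) == (index u (produced s) < index x (produced s))).
Proof.
move=> lt_k o_k x_C u_w; have [pre prod] := produced_pop lt_k o_k.
have := uniq_produced; rewrite prod => uniq_prod.
have notin_pre e : e \in take b (work k) -> e \notin pre.
  move: uniq_prod; rewrite cat_uniq => /and3P[_ /hasPn dis _] e_C.
  by apply: dis; rewrite mem_cat e_C.
have split_w : work k = take b (work k) ++ drop b (work k) by rewrite cat_take_drop.
rewrite [in index u (work k)]split_w [in index x (work k)]split_w.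
rewrite !index_cat x_C (negbTE (notin_pre _ x_C)).
case u_C: (u \in take b (work k)); first by rewrite (negbTE (notin_pre _ u_C)) ltn_add2l eqxx.
have u_pre : u \in pre.
  have : u \in pre ++ take b (work k) ++ output k.
    rewrite -prod mem_produced; have := work_range u_w; have := pushed_le_size k.
    lia.
  by rewrite !mem_cat u_C (negbTE (work_notin_output u_w)) !orbF.
have lt_u : index u pre < size pre by rewrite index_mem.
have lt_x : index x (take b (work k)) < size (take b (work k)) by rewrite index_mem.
by rewrite u_pre ltn_addr // ltnNge (leq_trans (ltnW lt_x)) ?leq_addr.
Qed.

Lemma work_order_block j t x u : j < size s -> pushed j < x <= pushed j.+1 ->
  x \in work t -> u \in work t -> u != x ->
  (index u (work t) < index x (work t)) = ((u < x) == (pushed j < u <= pushed j.+1)).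
Proof. by move=> lt_j x_blk x_w u_w ux; rewrite work_order // (same_push_block _ lt_j). Qed.

Hypothesis red : reduced s.

Lemma last_pushed_popped k b : k < size s -> op_at k = Pop b -> 0 < pushed k ->
  pushed k \in output k \/ take b (work k) = [:: pushed k].
Proof.
move=> lt_k o_k /last_push[t0 [lt_t0 push_t0 pushed_k pops]].
have t0S_k : (t0.+1 == k) || (t0.+1 < k) by rewrite -leq_eqVlt.
have pop_t0S : is_pop (op_at t0.+1).
  by case/orP: t0S_k => [/eqP->|lt_t0S]; [rewrite o_k | apply: pops; rewrite ltnSn].
have [o_t0 o_t0S] := red (leq_ltn_trans lt_t0 lt_k) push_t0 pop_t0S.
have work_t0S : work t0.+1 = pushed k :: work t0.
  by rewrite workS o_t0 pushed_k pushedS o_t0 addn1.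
case/orP: t0S_k => [/eqP eq_k|lt_t0S].
  have -> : b = 1 by move: o_k; rewrite -eq_k o_t0S => -[].
  by right; rewrite -[in work k]eq_k work_t0S /= take0.
left; have [pre ->] := output_suffix lt_t0S.
by rewrite outputS o_t0S work_t0S /= take0 mem_cat mem_head orbT.
Qed.

Lemma pushed_pop_max k b x : k < size s -> op_at k = Pop b -> x \in take b (work k) ->
  pushed k = \max_(e <- drop (index x (produced s)) (produced s)) e.
Proof.
move=> lt_k o_k x_C; have [pre prod] := produced_pop lt_k o_k.
have := uniq_produced; rewrite prod => uniq_prod.
rewrite (drop_index_cat_mid uniq_prod x_C); apply/eqP; rewrite eqn_leq; apply/andP; split.
  have pos : 0 < pushed k by have := work_range (mem_take x_C); lia.
  apply: leq_bigmax_seq => //.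
  case: (last_pushed_popped lt_k o_k pos) => [in_out|single].
    by rewrite mem_cat in_out orbT.
  move: x_C; rewrite single mem_seq1 => /eqP->; rewrite /= eqxx drop0.
  exact: mem_head.
apply/bigmax_leqP_seq => e e_in _.
have : e \in work k.+1 ++ output k.+1.
  rewrite mem_cat outputS o_k mem_cat; move: e_in; rewrite mem_cat.
  by case/orP=> [/mem_drop|] ->; rewrite ?orbT.
by rewrite mem_work_output (pushed_pop o_k) => /andP[].
Qed.
End Run.

Definition vertex (p q : nat) : int * int := (Posz (p + q), (Posz p - Posz q)%R).

Lemma foldl_vstep_vertex l p q :
  foldl vstep (vertex p q) l = vertex (p + total_push l) (q + total_pop l).
Proof.
elim: l p q => [|o l IH] p q /=; first by rewrite !addn0.
have -> : vstep (vertex p q) o = vertex (p + push_size o) (q + pop_size o).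
  by rewrite /vertex /vstep; case: o => [a|b] /=; congr pair; lia.
by rewrite IH /total_push /total_pop /= !addnA.
Qed.

Lemma nth_vertices s j : j <= size s ->
  nth (0%R, 0%R) (vertices s) j = vertex (pushed s j) (popped s j).
Proof.
case: j => [|j] lt_j /=; first by rewrite pushed0 popped0.
by rewrite nth_scanl // -[(0%R, 0%R)]/(vertex 0 0) foldl_vstep_vertex.
Qed.

Lemma eq_edge s1 s2 j1 j2 : j1 < size s1 -> j2 < size s2 ->
  edge s1 j1 = edge s2 j2 <->
  [/\ pushed s1 j1 = pushed s2 j2, popped s1 j1 = popped s2 j2,
      pushed s1 j1.+1 = pushed s2 j2.+1 & popped s1 j1.+1 = popped s2 j2.+1].
Proof.
move=> lt_j1 lt_j2; have le_j1 := ltnW lt_j1; have le_j2 := ltnW lt_j2.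
rewrite /edge !nth_vertices // /vertex.
by split=> [[] *|[-> -> -> ->]] //; split; lia.
Qed.

Lemma nth_states s i : i <= size s -> nth (init_state s) (states s) i = config s i.
Proof.
case: i => [|i] le_i /=; first by rewrite /config take0.
by rewrite nth_scanl.
Qed.

Lemma support_push s i a : well_formed s -> i < size s -> nth (Push 0) s i = Push a ->
  Defs.support s i = iota (pushed s i).+1 a.
Proof.
move=> wf lt_i o_i; rewrite /Defs.support nth_states ?(ltnW lt_i) // o_i.
have := @pushed_le_size s i.+1; rewrite pushedS o_i /= => le_n.
case: (config_invariant wf i); rewrite /input; case: (config s i) => [[I W] O] /= -> _ _.
exact: take_drop_iota.
Qed.

Lemma support_pop s i b : i < size s -> nth (Push 0) s i = Pop b ->
  Defs.support s i = take b (work s i).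
Proof.
move=> lt_i o_i; rewrite /Defs.support nth_states ?(ltnW lt_i) // o_i /work.
by case: (config s i) => [[I W] O].
Qed.

Section TwoRuns.
Variables s1 s2 : seq op.
Hypotheses (wf1 : well_formed s1) (red1 : reduced s1).
Hypotheses (wf2 : well_formed s2) (red2 : reduced s2).
Hypothesis same_produced : produced s1 = produced s2.

Variables (k1 b1 k2 b2 x : nat).
Hypotheses (lt_k1 : k1 < size s1) (o_k1 : nth (Push 0) s1 k1 = Pop b1).
Hypotheses (lt_k2 : k2 < size s2) (o_k2 : nth (Push 0) s2 k2 = Pop b2).
Hypotheses (x_C1 : x \in take b1 (work s1 k1)) (x_C2 : x \in take b2 (work s2 k2)).

Lemma pushed_pop_eq : pushed s1 k1 = pushed s2 k2.
Proof.
rewrite (pushed_pop_max wf1 red1 lt_k1 o_k1 x_C1).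
by rewrite (pushed_pop_max wf2 red2 lt_k2 o_k2 x_C2) same_produced.
Qed.

Lemma output_pop_eq : take b1 (work s1 k1) =i take b2 (work s2 k2) ->
  output s1 k1 = output s2 k2.
Proof.
move=> eq_C.
have [pre1 prod1] := produced_pop lt_k1 o_k1.
have [pre2 prod2] := produced_pop lt_k2 o_k2.
have := uniq_produced wf1; rewrite prod1 => /suffix_filter /(_ x_C1) ->.
have := uniq_produced wf2; rewrite prod2 => /suffix_filter /(_ x_C2) ->.
rewrite -prod1 -prod2 same_produced; apply: eq_filter => e.
by rewrite eq_C.
Qed.

Lemma edge_pop_eq : take b1 (work s1 k1) =i take b2 (work s2 k2) ->
  edge s1 k1 = edge s2 k2.
Proof.
move=> eq_C; have eq_b : b1 = b2.
  rewrite -(size_pop_block wf1 o_k1) -(size_pop_block wf2 o_k2).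
  by apply/perm_size/uniq_perm; rewrite ?take_uniq ?uniq_work.
apply/eq_edge => //; rewrite !poppedS o_k1 o_k2 (pushed_pop o_k1) (pushed_pop o_k2).
by rewrite -!size_output // output_pop_eq // pushed_pop_eq eq_b.
Qed.

Variables j1 j2 : nat.
Hypotheses (lt_j1 : j1 < size s1) (lt_j2 : j2 < size s2).
Hypothesis pushed_j : pushed s1 j1 = pushed s2 j2.
Hypothesis pushed_jS : pushed s1 j1.+1 = pushed s2 j2.+1.
Hypothesis x_blk : pushed s1 j1 < x <= pushed s1 j1.+1.

Lemma pop_mate_in_work u : u \in take b1 (work s1 k1) -> u \in work s2 k2.
Proof.
move=> u_C1; case: (eqVneq u x) => [->|ux]; first exact: mem_take x_C2.
have u_w1 := mem_take u_C1.
have : u \in work s2 k2 ++ output s2 k2.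
  by rewrite (mem_work_output wf2) -pushed_pop_eq (work_range wf1 u_w1).
(* Otherwise u leaves the stack of s2 before x, so lies above x there, while it
   lies below x in s1: impossible, as both orders are decided by the fixed push. *)
rewrite mem_cat => /orP[// | u_out]; exfalso.
have [k3 [b3 [lt_k3k2 lt_k3 o_k3 u_C3]]] := output_popped u_out.
have x_before_u : index x (produced s2) < index u (produced s2).
  have [pre prod] := produced_pop lt_k2 o_k2; have := uniq_produced wf2.
  by rewrite prod => uniq_prod; apply: index_cat_mid_lt_suffix.
have below1 : ((u < x) == (pushed s1 j1 < u <= pushed s1 j1.+1)) = false.
  rewrite -(work_order_block wf1 lt_j1 x_blk (mem_take x_C1) u_w1 ux).
  have := mem_pop_block wf1 lt_k1 o_k1 x_C1 u_w1; rewrite u_C1 same_produced.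
  rewrite [index u (produced s2) < _]ltnNge (ltnW x_before_u).
  by case: (_ < _).
have pushed_k3 : pushed s1 k1 = pushed s2 k3.
  rewrite (pushed_pop_max wf1 red1 lt_k1 o_k1 u_C1).
  by rewrite (pushed_pop_max wf2 red2 lt_k3 o_k3 u_C3) same_produced.
have [x_w3 x_out3] : x \in work s2 k3 /\ x \notin output s2 k3.+1.
  apply: (mem_work_before wf2 lt_k3k2 (mem_take x_C2)).
  by rewrite -pushed_k3 (work_range wf1 (mem_take x_C1)).
have x_C3 : x \notin take b3 (work s2 k3).
  by apply: contra x_out3; rewrite outputS o_k3 mem_cat => ->.
have := mem_pop_block wf2 lt_k3 o_k3 u_C3 x_w3; rewrite (negbTE x_C3) x_before_u.
rewrite (work_order wf2 x_w3 (mem_take u_C3)) 1?eq_sym // same_pushC.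
have x_blk2 : pushed s2 j2 < x <= pushed s2 j2.+1 by rewrite -pushed_j -pushed_jS.
rewrite (same_push_block _ lt_j2 x_blk2) -pushed_j -pushed_jS.
by move: below1; case: ltngtP ux => // _ _; case: (_ < u <= _).
Qed.

Lemma pop_block_sub : {subset take b1 (work s1 k1) <= take b2 (work s2 k2)}.
Proof.
move=> u u_C1; case: (eqVneq u x) => [->//|ux].
have u_w1 := mem_take u_C1; have u_w2 := pop_mate_in_work u_C1.
have x_blk2 : pushed s2 j2 < x <= pushed s2 j2.+1 by rewrite -pushed_j -pushed_jS.
rewrite (mem_pop_block wf2 lt_k2 o_k2 x_C2 u_w2) -same_produced.
rewrite (work_order_block wf2 lt_j2 x_blk2 (mem_take x_C2) u_w2 ux) -pushed_j -pushed_jS.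
rewrite -(work_order_block wf1 lt_j1 x_blk (mem_take x_C1) u_w1 ux).
by rewrite -(mem_pop_block wf1 lt_k1 o_k1 x_C1 u_w1).
Qed.

End TwoRuns.

Lemma pop_block_eq s1 s2 k1 b1 k2 b2 x j1 j2 :
  well_formed s1 -> reduced s1 -> well_formed s2 -> reduced s2 ->
  produced s1 = produced s2 ->
  k1 < size s1 -> nth (Push 0) s1 k1 = Pop b1 -> x \in take b1 (work s1 k1) ->
  k2 < size s2 -> nth (Push 0) s2 k2 = Pop b2 -> x \in take b2 (work s2 k2) ->
  j1 < size s1 -> j2 < size s2 ->
  pushed s1 j1 = pushed s2 j2 -> pushed s1 j1.+1 = pushed s2 j2.+1 ->
  pushed s1 j1 < x <= pushed s1 j1.+1 ->
  take b1 (work s1 k1) =i take b2 (work s2 k2).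
Proof.
move=> wf1 red1 wf2 red2 same lt_k1 o_k1 x_C1 lt_k2 o_k2 x_C2 lt_j1 lt_j2 eq_j eq_jS x_blk u.
have x_blk2 : pushed s2 j2 < x <= pushed s2 j2.+1 by rewrite -eq_j -eq_jS.
apply/idP/idP.
  exact: (pop_block_sub wf1 red1 wf2 red2 same lt_k1 o_k1 lt_k2 o_k2 x_C1 x_C2
            lt_j1 lt_j2 eq_j eq_jS x_blk).
exact: (pop_block_sub wf2 red2 wf1 red1 (esym same) lt_k2 o_k2 lt_k1 o_k1 x_C2 x_C1
          lt_j2 lt_j1 (esym eq_j) (esym eq_jS) x_blk2).
Qed.

Theorem mainTheorem11 (s : seq op) (i k : nat) :
  well_formed s -> reduced s ->
  i < size s -> k < size s ->
  is_push (nth (Push 0) s i) -> is_pop (nth (Push 0) s k) ->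
  correspond s i k ->
  fixed s i -> fixed s k.
Proof.
move=> wf red lt_i lt_k push_i pop_k [x [x_i x_k]] fixed_i t red_t equiv_st.
have [_ [wf_t [_ same_produced]]] := equiv_st.
case o_i: (nth (Push 0) s i) push_i => [a|//] _.
case o_k: (nth (Push 0) s k) pop_k => [//|b] _.
rewrite (support_pop lt_k o_k) in x_k.
have x_blk : pushed s i < x <= pushed s i.+1.
  by move: x_i; rewrite (support_push wf lt_i o_i) mem_iota pushedS o_i /=; lia.
have [j [lt_j /(eq_edge lt_j lt_i)[pushed_j _ pushed_jS _]]] := fixed_i t red_t equiv_st.
have x_t : x \in output t (size t).
  rewrite -produced_output -same_produced.
  by have [pre ->] := produced_pop lt_k o_k; rewrite !mem_cat x_k orbT.
have [k' [b' [_ lt_k' o_k' x_k']]] := output_popped x_t.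
have same_produced_t := esym same_produced.
exists k'; split=> //.
apply: (edge_pop_eq wf_t red_t wf red same_produced_t lt_k' o_k' lt_k o_k x_k' x_k).
apply: (pop_block_eq wf_t red_t wf red same_produced_t lt_k' o_k' x_k' lt_k o_k x_k
          lt_j lt_i pushed_j pushed_jS).
by rewrite pushed_j pushed_jS.
Qed.
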